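(* Let $\phi_n(x)=\sqrt{\tfrac{2n+1}{2}}\,P_n(x)$, $n\ge0$, be the orthonormal Legendre polynomials on $[-1,1]$, and consider separated Robin boundary conditions $a_+u(1)+b_+u'(1)=0$ and $a_-u(-1)+b_-u'(-1)=0$ with real constants satisfying $a_+b_+>0$ and $a_-b_-<0$. Set $b_{0,n}=a_+\phi_n(1)+b_+\phi_n'(1)$ and $b_{1,n}=a_-\phi_n(-1)+b_-\phi_n'(-1)$. Then there is a unique unit lower-triangular matrix $A=(a_{m,k})_{m,k\ge0}$ with lower bandwidth $2$ satisfying $b_{i,k}+b_{i,k+1}a_{k+1,k}+b_{i,k+2}a_{k+2,k}=0$ for $i=0,1$ and all $k\ge0$, and $A$ is a bounded operator on $\ell^2$.
   Context: $P_n$ is the Legendre polynomial of degree $n$ with the standard normalization $P_n(1)=1$. ''Unit lower-triangular with lower bandwidth 2'' means $a_{k,k}=1$ and $a_{m,k}=0$ unless $k\le m\le k+2$. $\ell^2$ is the space of square-summable sequences indexed from $0$. *)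

From Stdlib Require Import Reals Lra Lia.
Open Scope R_scope.

(* leg_pair n x = (P_n(x), P_{n+1}(x)) via Bonnet's recurrence
   (k+1) P_{k+1} = (2k+1) x P_k - k P_{k-1}, P_0 = 1, P_1 = x. *)
Fixpoint leg_pair (n : nat) (x : R) : R * R :=
  match n with
  | O => (1, x)
  | S n' => let (p, q) := leg_pair n' x in
            (q, ((2 * INR n' + 3) * x * q - (INR n' + 1) * p) / (INR n' + 2))
  end.

Definition legendre (n : nat) (x : R) : R := fst (leg_pair n x).

Definition phi (n : nat) (x : R) : R := sqrt ((2 * INR n + 1) / 2) * legendre n x.

Definition unit_lower_band2 (A : nat -> nat -> R) : Prop :=
  forall m k : nat, (m = k -> A m k = 1) /\ ((m < k \/ k + 2 < m)%nat -> A m k = 0).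

Definition lt_apply (A : nat -> nat -> R) (x : nat -> R) (m : nat) : R :=
  sum_f_R0 (fun k => A m k * x k) m.

Definition l2_bounded (A : nat -> nat -> R) : Prop :=
  exists C : R, forall (x : nat -> R) (s : R),
    infinite_sum (fun k => x k ^ 2) s ->
    exists t : R, infinite_sum (fun m => (lt_apply A x m) ^ 2) t /\ t <= C * s.

From Stdlib Require Import Reals Lra Lia FunctionalExtensionality.
Open Scope R_scope.

(* The boundary data of the orthonormal Legendre polynomials are explicit:
   with s_n = sqrt((2n+1)/2) and e_n = n(n+1)/2 we have phi_n(1) = s_n,
   phi_n'(1) = s_n e_n, phi_n(-1) = (-1)^n s_n, phi_n'(-1) = -(-1)^n s_n e_n.
   Hence b_{0,n} = U_n / a_+ and b_{1,n} = (-1)^n V_n / a_- where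
   U_n = s_n (a_+^2 + a_+ b_+ e_n) and V_n = s_n (a_-^2 - a_- b_- e_n); the sign
   conditions make U and V positive and nondecreasing.  For each column k the
   two conditions are then a 2x2 linear system in (a_{k+1,k}, a_{k+2,k}) with
   positive determinant, solved uniquely by Cramer's rule, and monotonicity of
   U, V bounds the solution by 1.  A unit lower-triangular band matrix is
   determined by its two subdiagonals, which gives existence and uniqueness of
   A; a band matrix with bounded entries is bounded on l^2 (each row involves
   at most three consecutive coordinates). *)

Lemma nat_pair_ind (P : nat -> Prop) :
  P 0%nat -> P 1%nat -> (forall n, P n -> P (S n) -> P (S (S n))) -> forall n, P n.
Proof.
  intros H0 H1 HS n. enough (P n /\ P (S n)) by tauto.
  induction n as [|n [IH IH']]; auto.
Qed.

Lemma INR_plus2_neq0 (n : nat) : INR n + 2 <> 0.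
Proof. pose proof (pos_INR n). lra. Qed.

Lemma legendre_SS (n : nat) (x : R) : legendre (S (S n)) x =
  ((2 * INR n + 3) * x * legendre (S n) x - (INR n + 1) * legendre n x) / (INR n + 2).
Proof. unfold legendre; simpl. destruct (leg_pair n x); reflexivity. Qed.

(* The derivative of P_n, defined by differentiating Bonnet's recurrence. *)
Fixpoint dleg (n : nat) (x : R) : R :=
  match n with
  | O => 0
  | S O => 1
  | S (S k as m) =>
      ((2 * INR k + 3) * (legendre m x + x * dleg m x) - (INR k + 1) * dleg k x)
        / (INR k + 2)
  end.

Lemma dleg_SS (n : nat) (x : R) : dleg (S (S n)) x =
  ((2 * INR n + 3) * (legendre (S n) x + x * dleg (S n) x) - (INR n + 1) * dleg n x)
    / (INR n + 2).
Proof. reflexivity. Qed.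

Lemma legendre_deriv (n : nat) (x : R) : derivable_pt_lim (legendre n) x (dleg n x).
Proof.
  revert x. induction n as [| |n IH IH'] using nat_pair_ind.
  - intro x.
    replace (legendre 0) with (fct_cte 1) by (apply functional_extensionality; reflexivity).
    apply derivable_pt_lim_const.
  - intro x. replace (legendre 1) with id by (apply functional_extensionality; reflexivity).
    apply derivable_pt_lim_id.
  - intro x.
    replace (legendre (S (S n))) with
      (mult_real_fct (/ (INR n + 2))
        (mult_real_fct (2 * INR n + 3) (id * legendre (S n))
         - mult_real_fct (INR n + 1) (legendre n)))%F.
    2:{ apply functional_extensionality; intro y. rewrite legendre_SS.
        unfold mult_real_fct, minus_fct, mult_fct, id. field. apply INR_plus2_neq0. }
    replace (dleg (S (S n)) x) with
      (/ (INR n + 2) * ((2 * INR n + 3) * (1 * legendre (S n) x + id x * dleg (S n) x)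
                        - (INR n + 1) * dleg n x)).
    2:{ rewrite dleg_SS. unfold id. field. apply INR_plus2_neq0. }
    apply derivable_pt_lim_scal, derivable_pt_lim_minus; apply derivable_pt_lim_scal; auto.
    apply derivable_pt_lim_mult; auto. apply derivable_pt_lim_id.
Qed.

(* e_n = P_n'(1) = n(n+1)/2. *)
Definition endslope (n : nat) : R := INR n * (INR n + 1) / 2.

Lemma legendre_at_one (n : nat) : legendre n 1 = 1.
Proof.
  induction n as [| |k IH IH'] using nat_pair_ind; try reflexivity.
  rewrite legendre_SS, IH, IH'. field. apply INR_plus2_neq0.
Qed.

Lemma legendre_at_minus_one (n : nat) : legendre n (-1) = (-1) ^ n.
Proof.
  induction n as [| |k IH IH'] using nat_pair_ind;
    [reflexivity | unfold legendre; simpl; ring |].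
  rewrite legendre_SS, IH, IH'. simpl pow. field. apply INR_plus2_neq0.
Qed.

Lemma dleg_at_one (n : nat) : dleg n 1 = endslope n.
Proof.
  induction n as [| |k IH IH'] using nat_pair_ind; unfold endslope; [simpl; field .. |].
  rewrite dleg_SS, legendre_at_one, IH, IH'. unfold endslope. rewrite !S_INR.
  field. apply INR_plus2_neq0.
Qed.

Lemma dleg_at_minus_one (n : nat) : dleg n (-1) = - (-1) ^ n * endslope n.
Proof.
  induction n as [| |k IH IH'] using nat_pair_ind; unfold endslope; [simpl; field .. |].
  rewrite dleg_SS, legendre_at_minus_one, IH, IH'. unfold endslope. rewrite !S_INR.
  simpl pow. field. apply INR_plus2_neq0.
Qed.

Definition phi_norm (n : nat) : R := sqrt ((2 * INR n + 1) / 2).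

Lemma phi_norm_pos (n : nat) : 0 < phi_norm n.
Proof. apply sqrt_lt_R0. pose proof (pos_INR n). lra. Qed.

Lemma phi_norm_incr (n : nat) : phi_norm n <= phi_norm (S n).
Proof. apply sqrt_le_1_alt. rewrite S_INR. lra. Qed.

Lemma endslope_nonneg (n : nat) : 0 <= endslope n.
Proof. unfold endslope. pose proof (pos_INR n). nra. Qed.

Lemma endslope_incr (n : nat) : endslope n <= endslope (S n).
Proof. unfold endslope. rewrite S_INR. pose proof (pos_INR n). nra. Qed.

Lemma phi_deriv (n : nat) (x : R) : derivable_pt_lim (phi n) x (phi_norm n * dleg n x).
Proof. exact (derivable_pt_lim_scal _ (phi_norm n) x _ (legendre_deriv n x)). Qed.

Lemma phi_at_one (n : nat) : phi n 1 = phi_norm n.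
Proof. unfold phi, phi_norm. rewrite legendre_at_one. ring. Qed.

Lemma phi_at_minus_one (n : nat) : phi n (-1) = (-1) ^ n * phi_norm n.
Proof. unfold phi, phi_norm. rewrite legendre_at_minus_one. ring. Qed.

Lemma phi_deriv_at_one (n : nat) (d : R) :
  derivable_pt_lim (phi n) 1 d -> d = phi_norm n * endslope n.
Proof. intro H. rewrite <- dleg_at_one. exact (uniqueness_limite _ _ _ _ H (phi_deriv n 1)). Qed.

Lemma phi_deriv_at_minus_one (n : nat) (d : R) :
  derivable_pt_lim (phi n) (-1) d -> d = - (-1) ^ n * phi_norm n * endslope n.
Proof.
  intro H. rewrite (uniqueness_limite _ _ _ _ H (phi_deriv n (-1))), dleg_at_minus_one. ring.
Qed.

Lemma profile_pos_incr (s e : nat -> R) (p q : R) :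
  (forall n, 0 < s n) -> (forall n, s n <= s (S n)) ->
  (forall n, 0 <= e n) -> (forall n, e n <= e (S n)) -> 0 < p -> 0 <= q ->
  (forall n, 0 < s n * (p + q * e n)) /\
  (forall n, s n * (p + q * e n) <= s (S n) * (p + q * e (S n))).
Proof.
  intros Hs Hsi He Hei Hp Hq. split; intro n.
  - specialize (Hs n). specialize (He n). apply Rmult_lt_0_compat; nra.
  - specialize (Hs n). specialize (Hsi n). specialize (He n). specialize (Hei n).
    apply Rmult_le_compat; nra.
Qed.

Section Cramer.
Variables U0 U1 U2 V0 V1 V2 : R.

Definition cramer_det : R := U1 * V2 + U2 * V1.
Definition cramer_x : R := (U2 * V0 - U0 * V2) / cramer_det.
Definition cramer_y : R := - (U1 * V0 + U0 * V1) / cramer_det.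

Hypothesis det_neq0 : cramer_det <> 0.

Lemma cramer_solves :
  U0 + U1 * cramer_x + U2 * cramer_y = 0 /\ V0 - V1 * cramer_x + V2 * cramer_y = 0.
Proof.
  pose proof det_neq0 as HD. unfold cramer_x, cramer_y. unfold cramer_det in *.
  split; field; exact HD.
Qed.

Lemma cramer_unique (x y : R) :
  U0 + U1 * x + U2 * y = 0 -> V0 - V1 * x + V2 * y = 0 -> x = cramer_x /\ y = cramer_y.
Proof.
  intros E0 E1. unfold cramer_x, cramer_y.
  (* Eliminate y (resp. x) by the combination V2*E0 - U2*E1 (resp. V1*E0 + U1*E1). *)
  assert (Hx : x * cramer_det = U2 * V0 - U0 * V2).
  { transitivity (V2 * (U0 + U1 * x + U2 * y) - U2 * (V0 - V1 * x + V2 * y)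
                  + (U2 * V0 - U0 * V2)); [unfold cramer_det; ring |].
    rewrite E0, E1. ring. }
  assert (Hy : y * cramer_det = - (U1 * V0 + U0 * V1)).
  { transitivity (V1 * (U0 + U1 * x + U2 * y) + U1 * (V0 - V1 * x + V2 * y)
                  - (U1 * V0 + U0 * V1)); [unfold cramer_det; ring |].
    rewrite E0, E1. ring. }
  split; [rewrite <- Hx | rewrite <- Hy]; field; exact det_neq0.
Qed.
End Cramer.

Section CramerBound.
Variables U0 U1 U2 V0 V1 V2 : R.
Hypotheses (U0_pos : 0 < U0) (U1_pos : 0 < U1) (U2_pos : 0 < U2)
           (V0_pos : 0 < V0) (V1_pos : 0 < V1) (V2_pos : 0 < V2).
Hypotheses (U01 : U0 <= U1) (U12 : U1 <= U2) (V01 : V0 <= V1) (V12 : V1 <= V2).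

Lemma cramer_bounded :
  Rabs (cramer_x U0 U1 U2 V0 V1 V2) <= 1 /\ Rabs (cramer_y U0 U1 U2 V0 V1 V2) <= 1.
Proof.
  set (D := cramer_det U1 U2 V1 V2).
  assert (HD : 0 < D) by (unfold D, cramer_det; nra).
  unfold cramer_x, cramer_y.
  split; apply Rabs_le; split;
    (apply (Rmult_le_reg_r D); [exact HD |]);
    unfold Rdiv; rewrite Rmult_assoc, Rinv_l by lra; unfold D, cramer_det; nra.
Qed.
End CramerBound.

Definition band2 (X Y : nat -> R) (m k : nat) : R :=
  if Nat.eqb m k then 1
  else if Nat.eqb m (S k) then X k
  else if Nat.eqb m (S (S k)) then Y k
  else 0.

Lemma band2_unit_lower (X Y : nat -> R) : unit_lower_band2 (band2 X Y).
Proof.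
  intros m k. unfold band2. split; intro H.
  - subst. rewrite Nat.eqb_refl. reflexivity.
  - rewrite (proj2 (Nat.eqb_neq m k)), (proj2 (Nat.eqb_neq m (S k))),
      (proj2 (Nat.eqb_neq m (S (S k)))) by lia. reflexivity.
Qed.

Lemma band2_sub1 (X Y : nat -> R) (k : nat) : band2 X Y (S k) k = X k.
Proof. unfold band2. rewrite (proj2 (Nat.eqb_neq (S k) k)) by lia. now rewrite Nat.eqb_refl. Qed.

Lemma band2_sub2 (X Y : nat -> R) (k : nat) : band2 X Y (S (S k)) k = Y k.
Proof.
  unfold band2.
  rewrite (proj2 (Nat.eqb_neq (S (S k)) k)), (proj2 (Nat.eqb_neq (S (S k)) (S k))) by lia.
  now rewrite Nat.eqb_refl.
Qed.

Lemma unit_lower_band2_ext (A B : nat -> nat -> R) :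
  unit_lower_band2 A -> unit_lower_band2 B ->
  (forall k, A (S k) k = B (S k) k) -> (forall k, A (S (S k)) k = B (S (S k)) k) -> A = B.
Proof.
  intros HA HB H1 H2. apply functional_extensionality; intro m.
  apply functional_extensionality; intro k.
  destruct (Nat.eq_dec m k) as [->|Hmk].
  { now rewrite (proj1 (HA k k)), (proj1 (HB k k)). }
  destruct (Nat.eq_dec m (S k)) as [->|Hm1]; [apply H1|].
  destruct (Nat.eq_dec m (S (S k))) as [->|Hm2]; [apply H2|].
  rewrite (proj2 (HA m k)), (proj2 (HB m k)) by lia. reflexivity.
Qed.

Definition shift (x : nat -> R) (m : nat) : R := match m with O => 0 | S j => x j end.

Lemma sum_sq_shift_le (x : nat -> R) (N : nat) :
  sum_f_R0 (fun m => shift x m ^ 2) N <= sum_f_R0 (fun m => x m ^ 2) N.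
Proof.
  assert (Hstep : forall n, sum_f_R0 (fun m => shift x m ^ 2) (S n)
                            = sum_f_R0 (fun m => x m ^ 2) n).
  { induction n as [|n IH]; simpl in *; [ring | rewrite IH; ring]. }
  destruct N as [|N]; [simpl; pose proof (pow2_ge_0 (x 0%nat)); lra |].
  rewrite Hstep, tech5. pose proof (pow2_ge_0 (x (S N))). lra.
Qed.

Lemma sq_abs_le (a M x : R) : Rabs a <= M -> (a * x) ^ 2 <= M ^ 2 * x ^ 2.
Proof.
  intro H. assert (a ^ 2 <= M ^ 2).
  { rewrite <- (pow2_abs a). pose proof (Rabs_pos a). nra. }
  pose proof (pow2_ge_0 x). rewrite Rpow_mult_distr. nra.
Qed.

Lemma sq_sum3_le (a b c : R) : (a + b + c) ^ 2 <= 3 * (a ^ 2 + b ^ 2 + c ^ 2).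
Proof.
  pose proof (pow2_ge_0 (a - b)); pose proof (pow2_ge_0 (b - c)); pose proof (pow2_ge_0 (a - c)).
  nra.
Qed.

Lemma sum_f_R0_last (f : nat -> R) (n : nat) :
  (forall k, (k < n)%nat -> f k = 0) -> sum_f_R0 f n = f n.
Proof.
  intro H. destruct n as [|n]; [reflexivity|]. simpl.
  rewrite sum_eq_R0; [ring|]. intros k Hk. apply H. lia.
Qed.

Section BandBound.
Variables (A : nat -> nat -> R) (M : R).
Hypothesis A_band : unit_lower_band2 A.
Hypothesis A_bounded : forall k, Rabs (A (S k) k) <= M /\ Rabs (A (S (S k)) k) <= M.

(* Row m of A x only involves x_m, x_{m-1}, x_{m-2}. *)
Lemma band2_row_sq (x : nat -> R) (m : nat) :
  lt_apply A x m ^ 2 <= 3 * (x m ^ 2 + M ^ 2 * shift x m ^ 2 + M ^ 2 * shift (shift x) m ^ 2).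
Proof.
  unfold lt_apply. destruct m as [|[|j]]; simpl shift.
  - simpl. rewrite (proj1 (A_band 0%nat 0%nat)) by reflexivity. nra.
  - simpl sum_f_R0. rewrite (proj1 (A_band 1%nat 1%nat)) by reflexivity.
    pose proof (sq_abs_le _ _ (x 0%nat) (proj1 (A_bounded 0%nat))).
    pose proof (sq_sum3_le (A 1%nat 0%nat * x 0%nat) (1 * x 1%nat) 0). nra.
  - change (sum_f_R0 (fun k => A (S (S j)) k * x k) (S (S j))) with
      (sum_f_R0 (fun k => A (S (S j)) k * x k) j + A (S (S j)) (S j) * x (S j)
         + A (S (S j)) (S (S j)) * x (S (S j))).
    rewrite sum_f_R0_last.
    2:{ intros k Hk. rewrite (proj2 (A_band (S (S j)) k)) by lia. ring. }
    rewrite (proj1 (A_band (S (S j)) (S (S j)))) by reflexivity.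
    pose proof (sq_abs_le _ _ (x j) (proj2 (A_bounded j))).
    pose proof (sq_abs_le _ _ (x (S j)) (proj1 (A_bounded (S j)))).
    pose proof (sq_sum3_le (A (S (S j)) j * x j) (A (S (S j)) (S j) * x (S j)) (1 * x (S (S j)))).
    nra.
Qed.

Lemma band2_partial_sums (x : nat -> R) (N : nat) :
  sum_f_R0 (fun m => lt_apply A x m ^ 2) N
    <= 3 * (1 + 2 * M ^ 2) * sum_f_R0 (fun m => x m ^ 2) N.
Proof.
  assert (Hrows : forall n, sum_f_R0 (fun m => lt_apply A x m ^ 2) n
    <= 3 * (sum_f_R0 (fun m => x m ^ 2) n + M ^ 2 * sum_f_R0 (fun m => shift x m ^ 2) n
            + M ^ 2 * sum_f_R0 (fun m => shift (shift x) m ^ 2) n)).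
  { induction n as [|n IH]; [apply band2_row_sq |].
    rewrite !tech5. pose proof (band2_row_sq x (S n)). lra. }
  pose proof (sum_sq_shift_le x N). pose proof (sum_sq_shift_le (shift x) N).
  pose proof (pow2_ge_0 M). specialize (Hrows N). nra.
Qed.
End BandBound.

(* Monotone convergence: a uniform bound on partial sums of |A x|^2 by those of
   |x|^2 gives boundedness on l^2. *)
Lemma l2_bounded_of_partial_sums (A : nat -> nat -> R) (C : R) :
  0 <= C ->
  (forall x N, sum_f_R0 (fun m => lt_apply A x m ^ 2) N <= C * sum_f_R0 (fun m => x m ^ 2) N) ->
  l2_bounded A.
Proof.
  intros HC HA. exists C. intros x s Hs.
  set (T := fun N => sum_f_R0 (fun m => lt_apply A x m ^ 2) N).
  assert (HT : forall N, T N <= C * s).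
  { intro N. eapply Rle_trans; [apply HA|]. apply Rmult_le_compat_l; [exact HC|].
    apply sum_incr; [exact Hs | intro; apply pow2_ge_0]. }
  assert (Hg : Un_growing T).
  { intro n. unfold T. simpl. pose proof (pow2_ge_0 (lt_apply A x (S n))). lra. }
  destruct (growing_cv T Hg) as [t Ht].
  { exists (C * s). intros y [i ->]. apply HT. }
  exists t. split; [exact Ht|].
  apply (Rle_cv_lim (Un := T) (Vn := fun _ => C * s)); [exact HT | exact Ht |].
  intros eps He. exists 0%nat. intros. unfold Rdist. rewrite Rminus_diag, Rabs_R0. lra.
Qed.

Lemma band2_l2_bounded (A : nat -> nat -> R) (M : R) :
  unit_lower_band2 A -> (forall k, Rabs (A (S k) k) <= M /\ Rabs (A (S (S k)) k) <= M) ->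
  l2_bounded A.
Proof.
  intros HA HM. apply (l2_bounded_of_partial_sums A (3 * (1 + 2 * M ^ 2))).
  - pose proof (pow2_ge_0 M). lra.
  - intros x N. apply band2_partial_sums; assumption.
Qed.

Definition bc_solves (b0 b1 : nat -> R) (A : nat -> nat -> R) : Prop :=
  unit_lower_band2 A /\
  (forall k : nat,
     b0 k + b0 (S k) * A (S k) k + b0 (S (S k)) * A (S (S k)) k = 0 /\
     b1 k + b1 (S k) * A (S k) k + b1 (S (S k)) * A (S (S k)) k = 0).

Section BoundarySystem.
Variables (b0 b1 U V : nat -> R) (c0 c1 : R).
Hypotheses (c0_neq0 : c0 <> 0) (c1_neq0 : c1 <> 0).
Hypotheses (b0_eq : forall n, b0 n = c0 * U n) (b1_eq : forall n, b1 n = c1 * (-1) ^ n * V n).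
Hypotheses (U_pos : forall n, 0 < U n) (V_pos : forall n, 0 < V n).
Hypotheses (U_incr : forall n, U n <= U (S n)) (V_incr : forall n, V n <= V (S n)).

Definition bc_sub1 (k : nat) : R :=
  cramer_x (U k) (U (S k)) (U (S (S k))) (V k) (V (S k)) (V (S (S k))).
Definition bc_sub2 (k : nat) : R :=
  cramer_y (U k) (U (S k)) (U (S (S k))) (V k) (V (S k)) (V (S (S k))).

Lemma bc_column_iff (k : nat) (x y : R) :
  (b0 k + b0 (S k) * x + b0 (S (S k)) * y = 0 /\ b1 k + b1 (S k) * x + b1 (S (S k)) * y = 0)
  <-> x = bc_sub1 k /\ y = bc_sub2 k.
Proof.
  (* Up to nonzero factors, column k is the Cramer system for U and V. *)
  assert (R0 : b0 k + b0 (S k) * x + b0 (S (S k)) * y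
               = c0 * (U k + U (S k) * x + U (S (S k)) * y)) by (rewrite !b0_eq; ring).
  assert (R1 : b1 k + b1 (S k) * x + b1 (S (S k)) * y
               = c1 * (-1) ^ k * (V k - V (S k) * x + V (S (S k)) * y))
    by (rewrite !b1_eq; simpl pow; ring).
  assert (Hc1 : c1 * (-1) ^ k <> 0).
  { apply Rmult_integral_contrapositive. split; [exact c1_neq0 | apply pow_nonzero; lra]. }
  assert (Hdet : cramer_det (U (S k)) (U (S (S k))) (V (S k)) (V (S (S k))) <> 0).
  { unfold cramer_det. pose proof (U_pos (S k)). pose proof (U_pos (S (S k))).
    pose proof (V_pos (S k)). pose proof (V_pos (S (S k))). nra. }
  rewrite R0, R1. split.
  - intros [E0 E1]. apply cramer_unique; [exact Hdet | |].
    + destruct (Rmult_integral _ _ E0); [contradiction | assumption].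
    + destruct (Rmult_integral _ _ E1); [contradiction | assumption].
  - intros [-> ->]. destruct (cramer_solves (U k) _ _ (V k) _ _ Hdet) as [E0 E1].
    unfold bc_sub1, bc_sub2. rewrite E0, E1. split; ring.
Qed.

Theorem bc_unique_bounded_solution :
  exists A : nat -> nat -> R,
    bc_solves b0 b1 A /\ (forall A', bc_solves b0 b1 A' -> A' = A) /\ l2_bounded A.
Proof.
  exists (band2 bc_sub1 bc_sub2). split; [| split].
  - split; [apply band2_unit_lower |]. intro k.
    rewrite band2_sub1, band2_sub2. apply bc_column_iff. split; reflexivity.
  - intros A' [HA' HE'].
    assert (Hcol : forall k, A' (S k) k = bc_sub1 k /\ A' (S (S k)) k = bc_sub2 k)
      by (intro k; exact (proj1 (bc_column_iff _ _ _) (HE' k))).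
    apply unit_lower_band2_ext; [exact HA' | apply band2_unit_lower | |]; intro k;
      rewrite ?band2_sub1, ?band2_sub2; apply Hcol.
  - apply (band2_l2_bounded _ 1); [apply band2_unit_lower |]. intro k.
    rewrite band2_sub1, band2_sub2. apply cramer_bounded; auto.
Qed.
End BoundarySystem.

Theorem mainTheorem2 (ap bp am bm : R) (dp dm : nat -> R) :
  ap * bp > 0 -> am * bm < 0 ->
  (forall n, derivable_pt_lim (phi n) 1 (dp n)) ->
  (forall n, derivable_pt_lim (phi n) (-1) (dm n)) ->
  let b0 := fun n => ap * phi n 1 + bp * dp n in
  let b1 := fun n => am * phi n (-1) + bm * dm n in
  exists A : nat -> nat -> R,
    (unit_lower_band2 A /\
     (forall k : nat,
        b0 k + b0 (S k) * A (S k) k + b0 (S (S k)) * A (S (S k)) k = 0 /\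
        b1 k + b1 (S k) * A (S k) k + b1 (S (S k)) * A (S (S k)) k = 0)) /\
    (forall A' : nat -> nat -> R,
       (unit_lower_band2 A' /\
        (forall k : nat,
           b0 k + b0 (S k) * A' (S k) k + b0 (S (S k)) * A' (S (S k)) k = 0 /\
           b1 k + b1 (S k) * A' (S k) k + b1 (S (S k)) * A' (S (S k)) k = 0)) ->
       A' = A) /\
    l2_bounded A.
Proof.
  intros Hp Hm Hdp Hdm b0 b1.
  assert (Hap : ap <> 0) by (intro; subst; lra).
  assert (Ham : am <> 0) by (intro; subst; lra).
  set (U := fun n => phi_norm n * (ap * ap + ap * bp * endslope n)).
  set (V := fun n => phi_norm n * (am * am + - (am * bm) * endslope n)).
  assert (Hb0 : forall n, b0 n = / ap * U n).
  { intro n. unfold b0, U. rewrite phi_at_one, (phi_deriv_at_one n _ (Hdp n)). field. exact Hap. }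
  assert (Hb1 : forall n, b1 n = / am * (-1) ^ n * V n).
  { intro n. unfold b1, V. rewrite phi_at_minus_one, (phi_deriv_at_minus_one n _ (Hdm n)).
    field. exact Ham. }
  destruct (profile_pos_incr phi_norm endslope (ap * ap) (ap * bp) phi_norm_pos phi_norm_incr
              endslope_nonneg endslope_incr) as [HU HUi]; [nra | lra |].
  destruct (profile_pos_incr phi_norm endslope (am * am) (- (am * bm)) phi_norm_pos phi_norm_incr
              endslope_nonneg endslope_incr) as [HV HVi]; [nra | lra |].
  apply (bc_unique_bounded_solution b0 b1 U V (/ ap) (/ am)); auto using Rinv_neq_0_compat.
Qed.
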